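(* The lower Vietoris monad $H$ on $\mathbf{Top}$ is observational.
   Context: $\mathbf{Top}$ is the category of topological spaces with product topologies. $HX$ is the set of closed subsets of $X$ (including $\emptyset$) with topology generated by the sets $\{C: C\cap U\neq\emptyset\}$ for $U\subseteq X$ open; $\eta_X(x)=\overline{\{x\}}$; $\mu_X(\mathcal{C})=\overline{\bigcup_{C\in\mathcal{C}}C}$; $Hf(C)=\overline{f(C)}$; commutative monoidal structure $\nabla(C,D)=C\times D$. For a commutative monad $T$ on a cartesian monoidal category: $\mathsf{Kl}(T)$ has morphisms $f:A\rightsquigarrow B$ corresponding to $f^\sharp:A\to TB$, composition $(g\circledcirc f)^\sharp=\mu\circ T(g^\sharp)\circ f^\sharp$, tensor $\otimes$ equal to $\times$ on objects with $(f\otimes g)^\sharp=\nabla\circ(f^\sharp\times g^\sharp)$; $\mathsf{force}_A^\sharp=1_{TA}$; $\mathsf{copy}_n^\sharp=\eta\circ\Delta_n:TX\to T((TX)^n)$; $\mathsf{samp}_n=\mathsf{force}^{\otimes n}\circledcirc\mathsf{copy}_n:TX\rightsquigarrow X^{\otimes n}$. $T$ is observational if for every $X$ the family $(\mathsf{samp}_n)_{n\in\mathbb{N}}$ is jointly monic in $\mathsf{Kl}(T)$. *)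

From HB Require Import structures.
From mathcomp Require Import all_boot all_order.
From mathcomp Require Import mathcomp_extra boolp classical_sets functions topology.
Set Implicit Arguments. Unset Strict Implicit. Unset Printing Implicit Defensive.
Local Open Scope classical_set_scope.

(** The lower Vietoris space HX: closed subsets of X (including the empty set). *)
Record HSet (X : topologicalType) := MkH { hset :> set X; hset_closed : closed hset }.
Arguments MkH {X}.

HB.instance Definition _ (X : topologicalType) := gen_eqMixin (HSet X).
HB.instance Definition _ (X : topologicalType) := gen_choiceMixin (HSet X).

Definition lv_subbase (X : topologicalType) (U : set X) : set (HSet X) :=
  [set C : HSet X | (hset C `&` U) !=set0].

HB.instance Definition _ (X : topologicalType) :=
  isSubBaseTopological.Build (HSet X) (@open X) (@lv_subbase X).

Definition H (X : topologicalType) : topologicalType := HSet X.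

Definition hcl (X : topologicalType) (A : set X) : H X :=
  MkH (closure A) (@closed_closure X A).

Definition eta (X : topologicalType) (x : X) : H X := hcl [set x].

Definition mu (X : topologicalType) (CC : H (H X)) : H X :=
  hcl (\bigcup_(C in hset CC) hset C).

Definition Hmap (A B : topologicalType) (f : A -> B) (C : H A) : H B :=
  hcl (f @` hset C).

Definition kcomp (A B C : topologicalType) (g : B -> H C) (f : A -> H B) : A -> H C :=
  fun a => mu (Hmap g (f a)).

(** n-fold tensor power X^{⊗n}, modelled as 'I_n -> X with the product topology *)
Section tpow_def.
Import ArrowAsProduct.
Definition tpow (X : topologicalType) (n : nat) : topologicalType := ('I_n -> X).

Lemma closed_prodn' (X : topologicalType) (n : nat) (C : 'I_n -> set X) :
  (forall i, closed (C i)) -> closed ([set x : tpow X n | forall i, C i (x i)]).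
Proof.
move=> cC.
have -> : [set x : tpow X n | forall i, C i (x i)] =
  \bigcap_(i in [set: 'I_n]) (@proj 'I_n (fun _ => X) i @^-1` C i).
  by rewrite predeqE => x; split => [h i _|h i]; [exact: h|exact: h].
apply: closed_bigI => i _; apply: preimage_closed; last exact: cC.
by move=> x _; exact: (@proj_continuous _ (fun _ => X) i).
Qed.
End tpow_def.

Lemma closed_prodn (X : topologicalType) (n : nat) (C : 'I_n -> H X) :
  closed ([set x : tpow X n | forall i, hset (C i) (x i)]).
Proof. exact: (@closed_prodn' X n (fun i => hset (C i)) (fun i => @hset_closed X (C i))). Qed.

Definition nablan (X : topologicalType) (n : nat) (C : tpow (H X) n) : H (tpow X n) :=
  MkH _ (@closed_prodn X n C).

Definition copy_sharp (X : topologicalType) (n : nat) (C : H X) : H (tpow (H X) n) :=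
  eta ((fun _ : 'I_n => C) : tpow (H X) n).

Definition forcen_sharp (X : topologicalType) (n : nat) : tpow (H X) n -> H (tpow X n) :=
  fun C => nablan C.

Definition samp_sharp (X : topologicalType) (n : nat) : H X -> H (tpow X n) :=
  kcomp (@forcen_sharp X n) (@copy_sharp X n).

From Pilot Require Import Defs.
From HB Require Import structures.
From mathcomp Require Import all_boot all_order.
From mathcomp Require Import finmap.
From mathcomp Require Import mathcomp_extra boolp classical_sets functions topology.
Set Implicit Arguments. Unset Strict Implicit. Unset Printing Implicit Defensive.
Local Open Scope classical_set_scope.

(** A closed subset of H(HX) is determined by the basic open sets
    <U_0> ∩ ... ∩ <U_(n-1)> of HX that it meets, where <U> is the set of closed
    sets meeting U.  Unfolding the Kleisli composites, samp_n ⊚ F meets the box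
    U_0 × ... × U_(n-1) exactly when F meets <U_0> ∩ ... ∩ <U_(n-1)>, so the
    family (samp_n ⊚ F)_n determines F. *)

Definition prodn (Y : topologicalType) n (V : 'I_n -> set Y) : set (tpow Y n) :=
  [set y | forall i, V i (y i)].

Definition lv_hits (X : topologicalType) n (U : 'I_n -> set X) : set (H X) :=
  [set C | forall i, lv_subbase (U i) C].

Lemma hset_inj (X : topologicalType) (C D : H X) : hset C = hset D -> C = D.
Proof.
by case: C D => C cC [D cD] /= eCD; subst D; congr MkH; exact: Prop_irrelevance.
Qed.

Lemma closureI_open_neq0 (Y : topologicalType) (A O : set Y) :
  open O -> (closure A `&` O) !=set0 <-> (A `&` O) !=set0.
Proof.
move=> oO; split=> [[y [Ay Oy]]|[y [Ay Oy]]]; first exact/Ay/open_nbhs_nbhs.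
by exists y; split; [exact: subset_closure|].
Qed.

Lemma open_lv_subbase (X : topologicalType) (U : set X) :
  open U -> open (lv_subbase U).
Proof.
move=> oU; exists [set lv_subbase U]; last by rewrite bigcup_set1.
by move=> _ ->; exact: finI_from1.
Qed.

Lemma eta_meets_open (X : topologicalType) (x : X) (O : set X) :
  open O -> (hset (Defs.eta x) `&` O) !=set0 <-> O x.
Proof.
move=> oO; rewrite closureI_open_neq0 //.
by split=> [[_ [-> //]]|Ox]; exists x.
Qed.

Lemma kcomp_meets_open (A B Z : topologicalType) (s : B -> H Z) (f : A -> H B)
    (a : A) (O : set Z) : open O ->
  (hset (kcomp s f a) `&` O) !=set0 <-> exists2 b, hset (f a) b & lv_subbase O (s b).
Proof.
move=> oO; rewrite closureI_open_neq0 //; split.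
- move=> [z [[K sfK Kz] Oz]].
  have : (closure (s @` hset (f a)) `&` lv_subbase O) !=set0.
    by exists K; split; [|exists z].
  by case/(closureI_open_neq0 _ (open_lv_subbase oO)) => _ [[b fb <-] sbO]; exists b.
- move=> [b fb [z [sbz Oz]]]; exists z; split=> //.
  by exists (s b) => //; apply: subset_closure; exists b.
Qed.

Section products.
Import ArrowAsProduct.

Lemma open_prodn (Y : topologicalType) n (V : 'I_n -> set Y) :
  (forall i, open (V i)) -> open (prodn V).
Proof.
move=> oV; rewrite openE => y Vy.
apply: (@filter_forall _ 'I_n (fun i => [set z : tpow Y n | V i (z i)]) (nbhs y)) => i.
apply: (@proj_continuous _ (fun _ => Y) i y).
by apply: open_nbhs_nbhs; split; [exact: oV|exact: Vy].
Qed.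

End products.

Lemma nablan_meets_prodn (X : topologicalType) n (Cs : tpow (H X) n)
    (U : 'I_n -> set X) :
  (hset (nablan Cs) `&` prodn U) !=set0 <-> prodn (fun i => lv_subbase (U i)) Cs.
Proof.
split=> [[x [Cx Ux]] i|CU]; first by exists (x i).
by have [x Cx] := choice CU; exists x; split=> i; have [] := Cx i.
Qed.

Lemma samp_meets_prodn (X : topologicalType) n (C : H X) (U : 'I_n -> set X) :
  (forall i, open (U i)) ->
  (hset (samp_sharp n C) `&` prodn U) !=set0 <-> lv_hits U C.
Proof.
move=> oU; rewrite kcomp_meets_open; last exact: open_prodn.
have oUs : open (prodn (fun i => lv_subbase (U i))).
  by apply: open_prodn => i; exact: open_lv_subbase.
have -> : lv_hits U C = prodn (fun i => lv_subbase (U i)) ((fun=> C) : tpow (H X) n).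
  by [].
rewrite -(eta_meets_open _ oUs).
split=> [[Cs copyCs /nablan_meets_prodn UCs]|[Cs [copyCs UCs]]]; exists Cs => //.
exact/nablan_meets_prodn.
Qed.

Lemma kcomp_samp_meets_prodn (X A : topologicalType) n (f : A -> H (H X)) (a : A)
    (U : 'I_n -> set X) : (forall i, open (U i)) ->
  (hset (kcomp (@samp_sharp X n) f a) `&` prodn U) !=set0 <->
  (hset (f a) `&` lv_hits U) !=set0.
Proof.
move=> oU; rewrite kcomp_meets_open; last exact: open_prodn.
by split=> [[C fC /(samp_meets_prodn _ oU)]|[C [fC /(samp_meets_prodn _ oU)]]];
  exists C.
Qed.

Lemma nbhs_lv_hits (X : topologicalType) (C : H X) (N : set (H X)) :
  nbhs C N -> exists n (U : 'I_n -> set X),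
    [/\ forall i, open (U i), lv_hits U C & lv_hits U `<=` N].
Proof.
rewrite nbhsE => -[_ [[Bs sBs <-] [B Bs_B BC]] BsN].
have [F openF BE] := sBs B Bs_B; subst B.
pose s := enum_fset F.
have sF (i : 'I_(size s)) : nth setT s i \in F by exact: mem_nth.
exists (size s), (fun i => nth setT s i); split.
- by move=> i; have := openF _ (sF i); rewrite inE.
- by move=> i; apply: BC; exact: sF.
- move=> D UD; apply: BsN; exists (\bigcap_(V in [set` F]) lv_subbase V) => //.
  move=> V FV; have sV : index V s < size s by rewrite index_mem.
  by have := UD (Ordinal sV); rewrite /= nth_index.
Qed.

Lemma lv_subset_hits (X : topologicalType) (F G : H (H X)) :
  (forall n (U : 'I_n -> set X), (forall i, open (U i)) ->
     (hset F `&` lv_hits U) !=set0 -> (hset G `&` lv_hits U) !=set0) ->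
  hset F `<=` hset G.
Proof.
move=> FG C FC; rewrite (closure_id (hset G)).1; last exact: hset_closed.
move=> N /nbhs_lv_hits [n [U [oU UC UN]]].
have [D [GD UD]] : (hset G `&` lv_hits U) !=set0 by apply: FG => //; exists C.
by exists D; split; [|exact: UN].
Qed.

Theorem theorem9p4 (X A : topologicalType) (f g : A -> H (H X)) :
  continuous f -> continuous g ->
  (forall n : nat, kcomp (@samp_sharp X n) f = kcomp (@samp_sharp X n) g) ->
  f = g.
Proof.
move=> _ _ samp_fg; apply: funext => a; apply: hset_inj.
have meets n (U : 'I_n -> set X) : (forall i, open (U i)) ->
    (hset (f a) `&` lv_hits U) !=set0 <-> (hset (g a) `&` lv_hits U) !=set0.
  by move=> oU; rewrite -!kcomp_samp_meets_prodn // samp_fg.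
by rewrite eqEsubset; split; apply: lv_subset_hits => n U oU /(meets n U oU).
Qed.
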